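(* Let $\Theta_1,\Theta_2$ be two nuclear contracting Dwork operators on $M^*$ such that $\Theta_1\equiv\Theta_2\pmod{\pi^i}$ (i.e. $(\Theta_1-\Theta_2)(M^* )\subset\pi^iM^*$) for some integer $i\ge0$. Then $\det(I-T\Theta_1|M^* )\equiv\det(I-T\Theta_2|M^* )\pmod{\pi^i}$ (coefficientwise).
   Context: $R$ is a complete discrete valuation ring of characteristic $0$ with uniformizer $\pi$, residue field $\mathbf{F}_q$, fraction field $K$, valuation $\mathrm{ord}_\pi$, $|a|_\pi=p^{-\mathrm{ord}_\pi a}$. Fix $n\ge1$; $X^u=\prod X_i^{u_i}$, $|u|=\sum u_i$. $A_0=\{\sum a_uX^u:a_u\in R,\ |a_u|_\pi\to0\}$ with Gauss norm $\|\cdot\|$, $A=\{\sum a_uX^u\in A_0:\liminf_{|u|\to\infty}\mathrm{ord}_\pi a_u/|u|>0\}$. $\sigma$ is an $R$-algebra endomorphism of $A_0$ with $\sigma(X_i)=X_i^q+\pi f_i$, $f_i\in A$. $L(b,c)=\{\sum a_vX^v:\mathrm{ord}_\pi a_v\ge b|v|+c\}$; $b_\sigma>0$ is a fixed rational with $\pi f_i\in L(b_\sigma,0)$. $M^*=\{\sum_ja_je_j^*:a_j\in A_0,\ \|a_j\|\to0\}$ (countable index set), $M^*(b,c)=\{\sum a_je_j^*\in M^*:a_j\in L(b,c)\}$. A Dwork operator on $M^*$ is a continuous $R$-linear $\Theta$ with $\Theta(\sigma(a)f)=a\Theta(f)$. Writing $\Theta(X^ve_{j_2}^* )=\sum G^*_{\{u,j_1\},\{v,j_2\}}X^ue_{j_1}^*$,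 it is nuclear if for fixed $u,v$, $\lim_{j_1\to\infty}\inf_{j_2}\mathrm{ord}_\pi G^*_{\{u,j_1\},\{v,j_2\}}=\infty$; contracting if $\Theta(M^*(b,c))\subset M^*(qb,c+c_1)$ for some rationals $b>0,c,c_1$. The Fredholm determinant: choose such $b$ with $0<b\le b_\sigma$ (passing to a totally ramified extension of $R$ one may take $b$ an integer) and let $G$ be the matrix of $\Theta$ on the $K$-Banach space $M^*(b,0)\otimes K$ w.r.t. the basis $\{\pi^{b|u|}X^ue_j^*\}$; then $\det(I-T\Theta|M^* ):=\det(I-TG)$, an entire function independent of the choice of $b$ (it also equals $\det(I-TG^* )$). *)

From HB Require Import structures.
From mathcomp Require Import all_boot all_order all_algebra.
From mathcomp Require Import finmap.
Set Implicit Arguments. Unset Strict Implicit. Unset Printing Implicit Defensive.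
Import Order.TTheory GRing.Theory Num.Theory.
Local Open Scope ring_scope.


Definition dvdpi (R : idomainType) (pi : R) (k : nat) (a : R) : Prop :=
  exists c : R, a = pi ^+ k * c.

(* ord_pi a >= r for a rational r  (ord_pi 0 = +oo) *)
Definition ord_ge (R : idomainType) (pi : R) (a : R) (r : rat) : Prop :=
  forall k : nat, (k%:R - 1 < r) -> dvdpi pi k a.

Definition is_cdvr (R : idomainType) (pi : R) (q : nat) : Prop :=
  (pi != 0) /\ ~~ (pi \is a GRing.unit) /\
  (forall a : R, a != 0 -> exists (k : nat) (u : R), u \is a GRing.unit /\ a = pi ^+ k * u) /\
  (forall m : nat, (m.+1)%:R != 0 :> R) /\
  (forall s : nat -> R,
      (forall N, exists M, forall m k, (M <= m)%N -> (M <= k)%N -> dvdpi pi N (s m - s k)) ->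
      exists l, forall N, exists M, forall m, (M <= m)%N -> dvdpi pi N (s m - l)) /\
  (exists reps : seq R, size reps = q /\
     (forall a : R, exists2 r, r \in reps & dvdpi pi 1 (a - r)) /\
     (forall i j, (i < q)%N -> (j < q)%N -> dvdpi pi 1 (reps`_i - reps`_j) -> i = j)).

Definition mon (n : nat) := {ffun 'I_n -> nat}.
Definition mdeg (n : nat) (u : mon n) : nat := (\sum_(i < n) u i)%N.
Definition mon0 (n : nat) : mon n := [ffun => 0%N].
Definition monX (n : nat) (i : 'I_n) (e : nat) : mon n := [ffun k => if k == i then e else 0%N].

(* index set of the basis X^u e_j^*  of M^*  *)
Definition idx (n : nat) (J : countType) := (mon n * J)%type.

Definition cofin (T : eqType) (P : T -> Prop) : Prop :=
  exists s : seq T, forall x, x \notin s -> P x.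

Definition tends0 (R : idomainType) (pi : R) (T : eqType) (a : T -> R) : Prop :=
  forall N : nat, cofin (fun x => dvdpi pi N (a x)).

(* A_0 is {a : mon n -> R | tends0 pi a}; its multiplication *)
Definition mulA (R : idomainType) (n : nat) (a b : mon n -> R) : mon n -> R :=
  fun w =>
  \sum_(u : {ffun 'I_n -> 'I_((\max_(i < n) w i)%N).+1} | [forall i, (u i <= w i)%N])
     a [ffun i => nat_of_ord (u i)] * b [ffun i => (w i - u i)%N].

Definition monoA (R : idomainType) (n : nat) (u : mon n) : mon n -> R :=
  fun v => (v == u)%:R.

Definition inA (R : idomainType) (pi : R) (n : nat) (a : mon n -> R) : Prop :=
  tends0 pi a /\
  exists eps : rat, 0 < eps /\ cofin (fun u => ord_ge pi (a u) (eps * (mdeg u)%:R)).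

Definition inL (R : idomainType) (pi : R) (n : nat) (b c : rat) (a : mon n -> R) : Prop :=
  forall v, ord_ge pi (a v) (b * (mdeg v)%:R + c).

Definition is_sigma (R : idomainType) (pi : R) (q n : nat) (f : 'I_n -> mon n -> R)
    (sigma : (mon n -> R) -> mon n -> R) : Prop :=
  (forall a, tends0 pi a -> tends0 pi (sigma a)) /\
  (forall (r : R) a b, tends0 pi a -> tends0 pi b ->
      sigma (fun u => r * a u + b u) = (fun u => r * sigma a u + sigma b u)) /\
  (forall a b, tends0 pi a -> tends0 pi b -> sigma (mulA a b) = mulA (sigma a) (sigma b)) /\
  sigma (monoA R (mon0 n)) = monoA R (mon0 n) /\
  (forall i, sigma (monoA R (monX i 1)) = (fun u => monoA R (monX i q) u + pi * f i u)).

(* M^*  : coefficient families x (u, j) (coefficient of X^u e_j^* ) tending to 0 *)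
Definition inM (R : idomainType) (pi : R) (n : nat) (J : countType) (x : idx n J -> R) : Prop :=
  tends0 pi x.

Definition inMb (R : idomainType) (pi : R) (n : nat) (J : countType) (b c : rat)
    (x : idx n J -> R) : Prop :=
  forall k, ord_ge pi (x k) (b * (mdeg k.1)%:R + c).

Definition actM (R : idomainType) (n : nat) (J : countType) (a : mon n -> R)
    (x : idx n J -> R) : idx n J -> R :=
  fun k => mulA a (fun u => x (u, k.2)) k.1.

Definition is_dwork (R : idomainType) (pi : R) (n : nat) (J : countType)
    (sigma : (mon n -> R) -> mon n -> R) (Th : (idx n J -> R) -> idx n J -> R) : Prop :=
  (forall x, inM pi x -> inM pi (Th x)) /\
  (forall (r : R) x y, inM pi x -> inM pi y ->
      Th (fun k => r * x k + y k) = (fun k => r * Th x k + Th y k)) /\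
  (forall N : nat, exists N' : nat, forall x, inM pi x ->
      (forall k, dvdpi pi N' (x k)) -> forall k, dvdpi pi N (Th x k)) /\
  (forall a x, tends0 pi a -> inM pi x -> Th (actM (sigma a) x) = actM a (Th x)).

Definition bvec (R : idomainType) (n : nat) (J : countType) (l : idx n J) : idx n J -> R :=
  fun k => (k == l)%:R.

Definition Gstar (R : idomainType) (n : nat) (J : countType)
    (Th : (idx n J -> R) -> idx n J -> R) (k l : idx n J) : R :=
  Th (bvec R l) k.

Definition nuclear (R : idomainType) (pi : R) (n : nat) (J : countType)
    (Th : (idx n J -> R) -> idx n J -> R) : Prop :=
  forall (u v : mon n) (N : nat),
    cofin (fun j1 : J => forall j2 : J, dvdpi pi N (Gstar Th (u, j1) (v, j2))).

Definition contracting (R : idomainType) (pi : R) (q n : nat) (J : countType)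
    (Th : (idx n J -> R) -> idx n J -> R) : Prop :=
  exists b c c1 : rat, 0 < b /\
    forall x, inM pi x -> inMb pi b c x -> inMb pi (q%:R * b) (c + c1) (Th x).

Definition fdet (R : idomainType) (T : choiceType) (G : T -> T -> R) (S : {fset T}) : R :=
  let s := in_tuple (enum_fset S) in \det (\matrix_(i, j) G (tnth s i) (tnth s j)).

(* c is the m-th coefficient of det(I - T G): the pi-adically convergent
   unordered sum (-1)^m sum_{|S| = m} det(G_S) *)
Definition fred_coef (R : idomainType) (pi : R) (T : choiceType) (G : T -> T -> R)
    (m : nat) (c : R) : Prop :=
  forall N : nat, exists F0 : {fset {fset T}},
    (forall S, S \in F0 -> size (enum_fset S) = m) /\
    forall F : {fset {fset T}}, (F0 `<=` F)%fset -> (forall S, S \in F -> size (enum_fset S) = m) ->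
      dvdpi pi N (c - (-1) ^+ m * \sum_(S <- enum_fset F) fdet G S).

Definition fred_det (R : idomainType) (pi : R) (n : nat) (J : countType)
    (Th : (idx n J -> R) -> idx n J -> R) (c : nat -> R) : Prop :=
  forall m, fred_coef pi (Gstar Th) m (c m).

(* The m-th coefficient of det(I - T Theta) is a pi-adic limit of signed sums
   of principal m x m minors of the matrix G^* of Theta.  Applied to a basis
   vector, Theta_1 - Theta_2 lands in pi^i M^*, so the entries of G^*_1 and
   G^*_2 are congruent mod pi^i; congruence mod pi^i is compatible with sums
   and products, hence with minors, their finite sums, and their limits. *)
From HB Require Import structures.
From mathcomp Require Import all_boot all_order all_algebra.
From mathcomp Require Import finmap.
From mathcomp Require Import ring.
Import Order.TTheory GRing.Theory Num.Theory.
Local Open Scope ring_scope.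

Section CongruenceModPowerOfPi.
Set Implicit Arguments.
Unset Strict Implicit.

Variables (R : idomainType) (pi : R) (k : nat).

Definition eqmodpi (a b : R) : Prop := dvdpi pi k (a - b).

Lemma eqmodpi_refl a : eqmodpi a a.
Proof. by exists 0; rewrite subrr mulr0. Qed.

Lemma eqmodpi_sym a b : eqmodpi a b -> eqmodpi b a.
Proof. by move=> [c Hc]; exists (- c); rewrite mulrN -Hc opprB. Qed.

Lemma eqmodpi_trans a b c : eqmodpi a b -> eqmodpi b c -> eqmodpi a c.
Proof.
move=> [x Hx] [y Hy]; exists (x + y).
by rewrite mulrDr -Hx -Hy addrA subrK.
Qed.

Lemma eqmodpiD a1 a2 b1 b2 :
  eqmodpi a1 b1 -> eqmodpi a2 b2 -> eqmodpi (a1 + a2) (b1 + b2).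
Proof.
move=> [x Hx] [y Hy]; exists (x + y).
by rewrite mulrDr -Hx -Hy opprD addrACA.
Qed.

Lemma eqmodpiM a1 a2 b1 b2 :
  eqmodpi a1 b1 -> eqmodpi a2 b2 -> eqmodpi (a1 * a2) (b1 * b2).
Proof.
move=> [x Hx] [y Hy]; exists (a1 * y + b2 * x).
by rewrite mulrDr !(mulrCA (pi ^+ k)) -Hx -Hy; ring.
Qed.

Lemma eqmodpi_sum (I : Type) (r : seq I) (F G : I -> R) :
  (forall x, eqmodpi (F x) (G x)) -> eqmodpi (\sum_(x <- r) F x) (\sum_(x <- r) G x).
Proof.
move=> FG; apply: (big_ind2 eqmodpi) => //; first exact: eqmodpi_refl.
by move=> *; apply: eqmodpiD.
Qed.

Lemma eqmodpi_prod (I : Type) (r : seq I) (F G : I -> R) :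
  (forall x, eqmodpi (F x) (G x)) -> eqmodpi (\prod_(x <- r) F x) (\prod_(x <- r) G x).
Proof.
move=> FG; apply: (big_ind2 eqmodpi) => //; first exact: eqmodpi_refl.
by move=> *; apply: eqmodpiM.
Qed.

Lemma eqmodpi_det d (A B : 'M[R]_d) :
  (forall a b, eqmodpi (A a b) (B a b)) -> eqmodpi (\det A) (\det B).
Proof.
move=> AB; apply: eqmodpi_sum => s.
by apply: eqmodpiM; [exact: eqmodpi_refl | apply: eqmodpi_prod].
Qed.

Lemma eqmodpi_fdet (T : choiceType) (G1 G2 : T -> T -> R) (S : {fset T}) :
  (forall x y, eqmodpi (G1 x y) (G2 x y)) -> eqmodpi (fdet G1 S) (fdet G2 S).
Proof. by move=> G12; apply: eqmodpi_det => a b; rewrite !mxE. Qed.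

(* Both coefficients are approximated modulo pi^k on any large enough family
   of m-subsets, in particular on the union of the two families provided by
   the definition. *)
Lemma eqmodpi_fred_coef (T : choiceType) (G1 G2 : T -> T -> R) m c1 c2 :
  (forall x y, eqmodpi (G1 x y) (G2 x y)) ->
  fred_coef pi G1 m c1 -> fred_coef pi G2 m c2 -> eqmodpi c1 c2.
Proof.
move=> G12 /(_ k) [F1 [F1m approx1]] /(_ k) [F2 [F2m approx2]].
have Fm S : S \in (F1 `|` F2)%fset -> size (enum_fset S) = m.
  by rewrite inE => /orP [/F1m | /F2m].
have c1_approx : eqmodpi c1 _ := approx1 _ (fsubsetUl F1 F2) Fm.
have c2_approx : eqmodpi c2 _ := approx2 _ (fsubsetUr F1 F2) Fm.
apply: eqmodpi_trans c1_approx _; apply: eqmodpi_trans (eqmodpi_sym c2_approx).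
apply: eqmodpiM; first exact: eqmodpi_refl.
by apply: eqmodpi_sum => S; apply: eqmodpi_fdet.
Qed.

Lemma bvec_inM n (J : countType) (l : idx n J) : inM pi (bvec R l).
Proof.
move=> N; exists [:: l] => x; rewrite inE /bvec => /negbTE ->.
by exists 0; rewrite !mulr0.
Qed.

Lemma eqmodpi_Gstar n (J : countType) (Th1 Th2 : (idx n J -> R) -> idx n J -> R) :
  (forall x, inM pi x -> forall l, dvdpi pi k (Th1 x l - Th2 x l)) ->
  forall l1 l2, eqmodpi (Gstar Th1 l1 l2) (Gstar Th2 l1 l2).
Proof. by move=> Th12 l1 l2; apply: Th12; exact: bvec_inM. Qed.

End CongruenceModPowerOfPi.

Theorem lemma4p13 (R : idomainType) (pi : R) (q n : nat) (J : countType)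
    (f : 'I_n -> mon n -> R) (bsig : rat) (sigma : (mon n -> R) -> mon n -> R)
    (Th1 Th2 : (idx n J -> R) -> idx n J -> R) (i : nat) (c1 c2 : nat -> R) :
  is_cdvr pi q -> (0 < n)%N ->
  (forall k, inA pi (f k)) -> 0 < bsig ->
  (forall k, inL pi bsig 0 (fun u => pi * f k u)) ->
  is_sigma pi q f sigma ->
  is_dwork pi sigma Th1 -> nuclear pi Th1 -> contracting pi q Th1 ->
  is_dwork pi sigma Th2 -> nuclear pi Th2 -> contracting pi q Th2 ->
  (forall x, inM pi x -> forall k, dvdpi pi i (Th1 x k - Th2 x k)) ->
  fred_det pi Th1 c1 -> fred_det pi Th2 c2 ->
  forall m, dvdpi pi i (c1 m - c2 m).
Proof.
move=> _ _ _ _ _ _ _ _ _ _ _ _ Th12 det1 det2 m.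
exact: eqmodpi_fred_coef (eqmodpi_Gstar Th12) (det1 m) (det2 m).
Qed.
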